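(* Let $S$ be a semibounded relation in $\mathfrak H$ with lower bound $\gamma\in\mathbb R$. Then: (a) $S_{\rm F}=\{\{\varphi,\varphi'\}\in S^*:\varphi\in\mathrm{dom}\,\bar{\mathfrak t}(S)\}$; and if $H$ is a selfadjoint extension of $S$ with $\mathrm{dom}\,H\subset\mathrm{dom}\,\bar{\mathfrak t}(S)$, then $H=S_{\rm F}$. (b) $S_{\rm f}=S\,\widehat+\,(\{0\}\times\mathrm{mul}\,S^* )$; and if $H$ is a symmetric extension of $S$ with $\mathrm{dom}\,H\subset\mathrm{dom}\,S$, then $H\subset S_{\rm f}$. (c) $S_{\rm f}=S_{\rm F}$ if and only if $\mathrm{dom}\,S=\overline{\mathrm{dom}}\,S\cap\mathrm{dom}\,S^*$; in particular this holds if $\mathrm{dom}\,S$ is closed.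
   Context: Linear relations in $\mathfrak H$ are linear subspaces of $\mathfrak H\times\mathfrak H$; $\mathrm{dom},\mathrm{mul}\,T=\{g:\{0,g\}\in T\}$; $T^*=\{\{h,k\}:(k,f)=(h,g)\ \forall\{f,g\}\in T\}$; $T^{**}$ is the closure; products $RT=\{\{f,h\}:\exists g,\{f,g\}\in T,\{g,h\}\in R\}$; $c+T=\{\{f,g+cf\}:\{f,g\}\in T\}$; $A\,\widehat+\,B=\{\{f+h,g+k\}:\{f,g\}\in A,\{h,k\}\in B\}$. $T$ is symmetric if $T\subset T^*$, selfadjoint if $T=T^*$. $S$ is semibounded with lower bound $\gamma$ if $\gamma$ is the supremum of all $c$ with $(\varphi',\varphi)\ge c\|\varphi\|^2$ for all $\{\varphi,\varphi'\}\in S$. $\mathfrak t(S)[\varphi,\psi]=(\varphi',\psi)$ on $\mathrm{dom}\,S$; $\bar{\mathfrak t}(S)$ is its closure. For $c\le\gamma$ let $Q_c$ be a representing map for $\mathfrak t(S)-c$, i.e. a linear operator into a Hilbert space with $\mathrm{dom}\,Q_c=\mathrm{dom}\,S$ and $\mathfrak t(S)[\varphi,\psi]=c(\varphi,\psi)+(Q_c\varphi,Q_c\psi)$. The Friedrichs extension is $S_{\rm F}=c+Q_c^*Q_c^{**}$ (the selfadjoint relation associated with the closed form $\bar{\mathfrak t}(S)$) and the weak Friedrichs extension is $S_{\rm f}=c+Q_c^*Q_c$; both are independent of the choice of $c$ and $Q_c$ and satisfy $S\subset S_{\rm f}\subset S_{\rm F}$. *)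

From HB Require Import structures.
From mathcomp Require Import all_boot all_order all_algebra.
From mathcomp Require Import complex.
From mathcomp Require Import boolp classical_sets reals.
Set Implicit Arguments. Unset Strict Implicit. Unset Printing Implicit Defensive.
Import Order.TTheory GRing.Theory Num.Theory.
Local Open Scope ring_scope.
Local Open Scope classical_set_scope.
Local Open Scope complex_scope.

Section Hilbert.
Variables (R : realType) (H : lmodType R[i]) (ip : H -> H -> R[i]).

Definition is_inner_product : Prop :=
  [/\ (forall (a : R[i]) (x y z : H), ip (a *: x + y) z = a * ip x z + ip y z),
      (forall x y : H, ip y x = (ip x y)^*),
      (forall x : H, 0 <= ip x x) &
      (forall x : H, ip x x = 0 -> x = 0)].

Definition normsq (x : H) : R := complex.Re (ip x x).

Definition converges (u : nat -> H) (x : H) : Prop :=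
  forall eps : R, 0 < eps -> exists N : nat, forall n : nat, (N <= n)%N ->
    normsq (u n - x) < eps.

Definition cauchy_seq (u : nat -> H) : Prop :=
  forall eps : R, 0 < eps -> exists N : nat, forall m n : nat,
    (N <= m)%N -> (N <= n)%N -> normsq (u m - u n) < eps.

Definition is_hilbert : Prop :=
  is_inner_product /\
  forall u : nat -> H, cauchy_seq u -> exists x : H, converges u x.

Definition closure_set (A : set H) : set H :=
  [set x | exists u : nat -> H, (forall n, A (u n)) /\ converges u x].

Definition closed_set (A : set H) : Prop := closure_set A `<=` A.

End Hilbert.

Section Relations.
Variable (R : realType).
Local Notation C := R[i].

Definition linrel (A B : lmodType C) (T : set (A * B)) : Prop :=
  T (0, 0) /\
  forall (a : C) (p q : A * B), T p -> T q ->
    T (a *: p.1 + q.1, a *: p.2 + q.2).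

Definition rdom (A B : lmodType C) (T : set (A * B)) : set A :=
  [set f | exists g, T (f, g)].

Definition rmul (A B : lmodType C) (T : set (A * B)) : set B :=
  [set g | T (0, g)].

Definition radj (A B : lmodType C) (ipA : A -> A -> C) (ipB : B -> B -> C)
  (T : set (A * B)) : set (B * A) :=
  [set p | forall q, T q -> ipA p.2 q.1 = ipB p.1 q.2].

Definition rcomp (A B D : lmodType C) (Rr : set (B * D)) (T : set (A * B)) :
  set (A * D) :=
  [set p | exists g, T (p.1, g) /\ Rr (g, p.2)].

(* c + T = {{f, g + c f} : {f,g} in T}, c real *)
Definition rshift (A : lmodType C) (c : R) (T : set (A * A)) : set (A * A) :=
  [set p | T (p.1, p.2 - c%:C *: p.1)].

Definition rsum (A B : lmodType C) (T1 T2 : set (A * B)) : set (A * B) :=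
  [set p | exists p1 p2, T1 p1 /\ T2 p2 /\ p = (p1.1 + p2.1, p1.2 + p2.2)].

Definition symmetric_rel (A : lmodType C) (ip : A -> A -> C) (T : set (A * A)) :=
  T `<=` radj ip ip T.

Definition selfadjoint_rel (A : lmodType C) (ip : A -> A -> C) (T : set (A * A)) :=
  T = radj ip ip T.

Definition is_lb (A : lmodType C) (ip : A -> A -> C) (S : set (A * A)) (c : R) :=
  forall p, S p -> c%:C * ip p.1 p.1 <= ip p.2 p.1.

Definition semibounded_with (A : lmodType C) (ip : A -> A -> C)
  (S : set (A * A)) (gamma : R) : Prop :=
  (forall c, is_lb ip S c -> c <= gamma) /\
  (forall d, d < gamma -> exists c, is_lb ip S c /\ d < c).

Definition graph_on (A B : lmodType C) (D : set A) (Q : A -> B) : set (A * B) :=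
  [set p | D p.1 /\ p.2 = Q p.1].

(* Q is a representing map for t(S) - c: a linear operator with
   dom Q = dom S and t(S)[phi,psi] = c (phi,psi) + (Q phi, Q psi) *)
Definition representing_map (A B : lmodType C) (ipA : A -> A -> C)
  (ipB : B -> B -> C) (S : set (A * A)) (c : R) (Q : A -> B) : Prop :=
  (forall (a : C) (x y : A), rdom S x -> rdom S y ->
      Q (a *: x + y) = a *: Q x + Q y) /\
  (forall (phi phi' psi : A), S (phi, phi') -> rdom S psi ->
      ipA phi' psi = c%:C * ipA phi psi + ipB (Q phi) (Q psi)).

(* domain of the closure of the form t(S)[phi,psi] = (phi', psi):
   phi is in dom tbar(S) iff there is a sequence phi_n in dom S with
   phi_n -> phi and t(S)[phi_n - phi_m] -> 0 *)
Definition dom_form_closure (A : lmodType C) (ip : A -> A -> C)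
  (S : set (A * A)) : set A :=
  [set phi | exists u : nat -> A * A,
     (forall n, S (u n)) /\ converges ip (fun n => (u n).1) phi /\
     (forall eps : R, 0 < eps -> exists N : nat, forall m n : nat,
        (N <= m)%N -> (N <= n)%N ->
        `| ip ((u n).2 - (u m).2) ((u n).1 - (u m).1) | < eps%:C)].

(* Friedrichs extension S_F = c + Q^* Q^** *)
Definition friedrichs (A B : lmodType C) (ipA : A -> A -> C)
  (ipB : B -> B -> C) (S : set (A * A)) (c : R) (Q : A -> B) : set (A * A) :=
  let G := graph_on (rdom S) Q in
  rshift c (rcomp (radj ipA ipB G) (radj ipB ipA (radj ipA ipB G))).

(* weak Friedrichs extension S_f = c + Q^* Q *)
Definition weak_friedrichs (A B : lmodType C) (ipA : A -> A -> C)
  (ipB : B -> B -> C) (S : set (A * A)) (c : R) (Q : A -> B) : set (A * A) :=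
  let G := graph_on (rdom S) Q in
  rshift c (rcomp (radj ipA ipB G) G).

End Relations.

From HB Require Import structures.
From mathcomp Require Import all_boot all_order all_algebra.
From mathcomp Require Import complex.
From mathcomp Require Import boolp classical_sets reals.
From mathcomp Require Import ring lra.
Set Implicit Arguments. Unset Strict Implicit. Unset Printing Implicit Defensive.
Import Order.TTheory GRing.Theory Num.Theory.
Local Open Scope ring_scope.
Local Open Scope classical_set_scope.
Local Open Scope complex_scope.

(* Let G be the graph of the representing map Q on dom S, a subspace of
   H x K, so that S_f = c + Q^* Q and S_F = c + Q^* Q^**.  By the projection
   theorem in H x K, Q^** is the closure of G, and a sequence of G converging
   to {phi, k} is exactly a t(S)-Cauchy sequence approximating phi; together
   with t(S)[phi, psi] = c (phi, psi) + (Q phi, Q psi) this identifies S_F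
   with the part of S^* over dom tbar(S).  S_F is symmetric and S_F - (c - 1)
   is onto (project onto the closed subspace Q^** of H x K), so S_F is
   selfadjoint; a selfadjoint extension of S lies in S^*, hence in S_F under
   the domain condition, hence equals S_F.  S_f is described directly from
   the form identity, and comparing both descriptions gives (c). *)

Section ComplexAux.
Variable R : realType.

Lemma ReD (a b : R[i]) : complex.Re (a + b) = complex.Re a + complex.Re b.
Proof. by case: a; case: b. Qed.

Lemma ReN (a : R[i]) : complex.Re (- a) = - complex.Re a.
Proof. by case: a. Qed.

Lemma ReJ (a : R[i]) : complex.Re (conjc a) = complex.Re a.
Proof. by case: a. Qed.

Lemma ge0_RRe (z : R[i]) : 0 <= z -> z = (complex.Re z)%:C.
Proof. by move=> /ger0_Im; case: z => a b /= ->. Qed.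

Lemma conjc_realMD (r : R) (a b : R[i]) : conjc (r%:C * a + b) = r%:C * conjc a + conjc b.
Proof. by rewrite -[in RHS]conjc_real -rmorphM -rmorphD. Qed.

Lemma normc_real (x : R) : `|x%:C| = `|x|%:C.
Proof. by rewrite normc_def /= expr0n addr0 sqrtr_sqr. Qed.

Lemma normc_ge0 (a : R[i]) : 0 <= Normc.normc a.
Proof. by case: a => ? ?; exact: sqrtr_ge0. Qed.

Lemma small_eq0 (r : R) : 0 <= r -> (forall e, 0 < e -> r < e) -> r = 0.
Proof.
move=> r0 h; apply/eqP; rewrite eq_le r0 andbT.
by apply/ler_addgt0Pr => e /h /ltW; rewrite add0r.
Qed.

Lemma small_normc_eq0 (z : R[i]) : (forall e : R, 0 < e -> `|z| < e%:C) -> z = 0.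
Proof.
move=> h; have /complex_realP [k hk] := normr_real z.
have k0 : 0 <= k by rewrite -lecR -hk normr_ge0.
suff k00 : k = 0 by apply: normr0_eq0; rewrite hk k00.
by apply: small_eq0 => // e e0; rewrite -ltcR -hk h.
Qed.

Lemma ltr_normMD (c s r e : R) : 0 <= s -> 0 <= r ->
  s < e / 2 / (`|c| + 1) -> r < e / 2 -> `|c * s + r| < e.
Proof.
move=> s0 r0 hs hr.
have hc : 0 < `|c| + 1 by have := normr_ge0 c; lra.
rewrite ltr_pdivlMr // in hs.
have h1 : `|c * s + r| <= `|c| * s + r.
  by apply: le_trans (ler_normD _ _) _; rewrite normrM (ger0_norm s0) (ger0_norm r0).
have h2 : `|c| * s <= s * (`|c| + 1) by rewrite mulrDr mulr1 mulrC; lra.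
lra.
Qed.

Lemma ltr_of_normMD (c s r e : R) : 0 <= s -> 0 <= r ->
  s < e / 2 / (`|c| + 1) -> `|c * s + r| < e / 2 -> r < e.
Proof.
move=> s0 r0 hs hr.
have hc : 0 < `|c| + 1 by have := normr_ge0 c; lra.
rewrite ltr_pdivlMr // in hs.
have a1 := ler_norm (c * s + r).
have a2 := ler_norm (- (c * s)).
rewrite normrN normrM (ger0_norm s0) in a2.
have h2 : `|c| * s <= s * (`|c| + 1) by rewrite mulrDr mulr1 mulrC; lra.
lra.
Qed.

Definition inv_succ (n : nat) : R := (n.+1%:R)^-1.

Lemma inv_succ_gt0 n : 0 < inv_succ n.
Proof. by rewrite invr_gt0 ltr0Sn. Qed.

Lemma inv_succ_le1 n : inv_succ n <= 1.
Proof. by rewrite invf_le1 ?ltr0Sn // ler1n. Qed.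

Lemma inv_succ_le m n : (m <= n)%N -> inv_succ n <= inv_succ m.
Proof. by move=> h; rewrite lef_pV2 ?posrE ?ltr0Sn // ler_nat. Qed.

Lemma inv_succ_small (e : R) : 0 < e -> exists N : nat, inv_succ N < e.
Proof.
move=> e0; exists (Num.Def.archi_bound e^-1).
have e0' : 0 <= e^-1 by rewrite invr_ge0 ltW.
have h := archi_boundP e0'.
rewrite /inv_succ invf_plt ?posrE ?ltr0Sn //.
by apply: lt_le_trans h _; rewrite ler_nat.
Qed.

Definition cvgC (a : nat -> R[i]) (l : R[i]) :=
  forall e : R, 0 < e -> exists N, forall n, (N <= n)%N -> `|a n - l| < e%:C.

Lemma cvgC_uniq a l1 l2 : cvgC a l1 -> cvgC a l2 -> l1 = l2.
Proof.
move=> h1 h2; apply/eqP; rewrite -subr_eq0; apply/eqP.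
apply: small_normc_eq0 => e e0.
have e2 : 0 < e / 2 by rewrite divr_gt0.
have [N1 hN1] := h1 _ e2; have [N2 hN2] := h2 _ e2.
have hn1 := hN1 (maxn N1 N2) (leq_maxl _ _).
have hn2 := hN2 (maxn N1 N2) (leq_maxr _ _).
have -> : l1 - l2 = (a (maxn N1 N2) - l2) - (a (maxn N1 N2) - l1) by ring.
apply: le_lt_trans (ler_normB _ _) _.
by rewrite [e](splitr e) rmorphD ltrD.
Qed.

Lemma cvgC_eq a b l1 l2 : a =1 b -> cvgC a l1 -> cvgC b l2 -> l1 = l2.
Proof. by move=> ab; rewrite (funext ab); exact: cvgC_uniq. Qed.

Lemma cvgC_cst l : cvgC (fun _ => l) l.
Proof. by move=> e e0; exists 0%N => n _; rewrite subrr normr0 ltcR. Qed.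

Lemma cvgC_conj a l : cvgC a l -> cvgC (fun n => conjc (a n)) (conjc l).
Proof.
move=> h e e0; have [N hN] := h e e0; exists N => n /hN.
by rewrite -rmorphB normcJ.
Qed.

End ComplexAux.

Section InnerProduct.
Variables (R : realType) (V : lmodType R[i]) (ip : V -> V -> R[i]).
Hypothesis ip_inner : is_inner_product ip.

Lemma ipDZl a x y z : ip (a *: x + y) z = a * ip x z + ip y z.
Proof. by case: ip_inner. Qed.
Lemma ipC x y : ip y x = conjc (ip x y).
Proof. by case: ip_inner. Qed.
Lemma ipxx_ge0 x : 0 <= ip x x.
Proof. by case: ip_inner. Qed.
Lemma ipxx_eq0 x : ip x x = 0 -> x = 0.
Proof. by case: ip_inner => _ _ _; apply. Qed.

Lemma ip0l z : ip 0 z = 0.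
Proof.
have := ipDZl 1 0 0 z; rewrite scale1r addr0 mul1r => h.
by apply: (addrI (ip 0 z)); rewrite addr0 -h.
Qed.
Lemma ipDl x y z : ip (x + y) z = ip x z + ip y z.
Proof. by rewrite -[x]scale1r ipDZl mul1r scale1r. Qed.
Lemma ipZl a x z : ip (a *: x) z = a * ip x z.
Proof. by rewrite -[a *: x]addr0 ipDZl ip0l addr0. Qed.
Lemma ipNl x z : ip (- x) z = - ip x z.
Proof. by rewrite -scaleN1r ipZl mulN1r. Qed.
Lemma ipBl x y z : ip (x - y) z = ip x z - ip y z.
Proof. by rewrite ipDl ipNl. Qed.
Lemma ip0r z : ip z 0 = 0.
Proof. by rewrite ipC ip0l conjc0. Qed.
Lemma ipDr x y z : ip z (x + y) = ip z x + ip z y.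
Proof. by rewrite ipC ipDl rmorphD /= -!ipC. Qed.
Lemma ipZr a x z : ip z (a *: x) = conjc a * ip z x.
Proof. by rewrite ipC ipZl rmorphM /= -ipC. Qed.
Lemma ipNr x z : ip z (- x) = - ip z x.
Proof. by rewrite ipC ipNl rmorphN /= -ipC. Qed.
Lemma ipBr x y z : ip z (x - y) = ip z x - ip z y.
Proof. by rewrite ipDr ipNr. Qed.
Lemma ipZr_real (c : R) x z : ip z (c%:C *: x) = c%:C * ip z x.
Proof. by rewrite ipZr conjc_real. Qed.

Lemma normsq_ge0 x : 0 <= normsq ip x.
Proof. by rewrite -lecR -ge0_RRe ipxx_ge0. Qed.

Lemma ipxxE x : ip x x = (normsq ip x)%:C.
Proof. exact: ge0_RRe (ipxx_ge0 x). Qed.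

Definition ipnorm x : R := Num.sqrt (normsq ip x).

Lemma ipnorm_ge0 x : 0 <= ipnorm x. Proof. exact: sqrtr_ge0. Qed.

Lemma ipnorm_sq x : ipnorm x ^+ 2 = normsq ip x.
Proof. by rewrite sqr_sqrtr // normsq_ge0. Qed.

Lemma ipxx_ipnorm x : ip x x = (ipnorm x)%:C ^+ 2.
Proof. by rewrite ipxxE -ipnorm_sq rmorphXn. Qed.

Lemma ipnorm0 : ipnorm 0 = 0.
Proof. by rewrite /ipnorm /normsq ip0l /= sqrtr0. Qed.

Lemma ipnormN x : ipnorm (- x) = ipnorm x.
Proof. by rewrite /ipnorm /normsq ipNl ipNr opprK. Qed.

Lemma ipnormB x y : ipnorm (x - y) = ipnorm (y - x).
Proof. by rewrite -ipnormN opprB. Qed.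

Lemma ipnormZ (a : R[i]) x : ipnorm (a *: x) = Normc.normc a * ipnorm x.
Proof.
apply: complexI; rewrite rmorphM.
have h1 : (ipnorm (a *: x))%:C \in Num.nneg by rewrite nnegrE ler0c ipnorm_ge0.
have h2 : `|a| * (ipnorm x)%:C \in Num.nneg.
  by rewrite nnegrE mulr_ge0 ?normr_ge0 // ler0c ipnorm_ge0.
apply: (@pexpIrn _ 2 isT _ _ h1 h2) => /=.
by rewrite exprMn -!ipxx_ipnorm ipZl ipZr mulrA normCK mulrC.
Qed.

Lemma ipnormZ_real (r : R) x : ipnorm (r%:C *: x) = `|r| * ipnorm x.
Proof. by rewrite ipnormZ; congr (_ * _); apply: complexI; rewrite -normc_real. Qed.

Lemma ipxx_sub_proj w y : ip y y != 0 ->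
  ip (w - (ip w y / ip y y) *: y) (w - (ip w y / ip y y) *: y) =
  ip w w - ip w y * conjc (ip w y) / ip y y.
Proof.
move=> hb; have ipyy : conjc (ip y y) = ip y y by rewrite -ipC.
rewrite ipBl !ipBr !ipZl !ipZr rmorphM /= conjc_inv ipyy [ip y w]ipC.
set a := ip w y; set b := ip y y; set ww := ip w w.
by field.
Qed.

Lemma cauchy_schwarz x y : `|ip x y| ^+ 2 <= ip x x * ip y y.
Proof.
have [->|hy] := eqVneq y 0; first by rewrite !ip0r normr0 expr0n mulr0.
have hb : ip y y != 0 by apply/eqP=> /ipxx_eq0 /eqP; rewrite (negbTE hy).
have hbp : 0 < ip y y by rewrite lt_def hb ipxx_ge0.
have := ipxx_ge0 (x - (ip x y / ip y y) *: y).
by rewrite ipxx_sub_proj // subr_ge0 ler_pdivrMr // normCK.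
Qed.

Lemma normc_ip_le x y : `|ip x y| <= (ipnorm x * ipnorm y)%:C.
Proof.
rewrite -(ler_pXn2r (_ : (0 < 2)%N)) //; last 2 first.
- by rewrite qualifE /= normr_ge0.
- by rewrite qualifE /= ler0c mulr_ge0 // ipnorm_ge0.
by rewrite rmorphM exprMn -!ipxx_ipnorm cauchy_schwarz.
Qed.

Lemma Re_ip_le x y : complex.Re (ip x y) <= ipnorm x * ipnorm y.
Proof.
rewrite -lecR; apply: le_trans (normc_ip_le x y).
by apply: le_trans (normc_ge_Re _); rewrite lecR ler_norm.
Qed.

Lemma ipnormD_le x y : ipnorm (x + y) <= ipnorm x + ipnorm y.
Proof.
rewrite -(ler_pXn2r (_ : (0 < 2)%N)) ?qualifE /= ?ipnorm_ge0 ?addr_ge0 ?ipnorm_ge0 //.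
rewrite ipnorm_sq /normsq ipDl !ipDr !ReD [ip y x]ipC ReJ.
have := Re_ip_le x y; have := ipnorm_sq x; have := ipnorm_sq y; rewrite /normsq.
move=> <- <-; lra.
Qed.

Lemma ipnorm_sub_le x y z : ipnorm (x - z) <= ipnorm (x - y) + ipnorm (y - z).
Proof. by have := ipnormD_le (x - y) (y - z); rewrite addrA subrK. Qed.

Lemma ipnorm_lt_sq x e : 0 < e -> (ipnorm x < e) = (normsq ip x < e ^+ 2).
Proof. by move=> e0; rewrite -ipnorm_sq ltr_pXn2r // qualifE /= ?ipnorm_ge0 ?ltW. Qed.

Lemma convergesP u x : converges ip u x <->
  (forall e, 0 < e -> exists N, forall n, (N <= n)%N -> ipnorm (u n - x) < e).
Proof.
split=> h e e0.
  have [N hN] := h _ (exprn_gt0 2 e0).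
  by exists N => n hn; rewrite ipnorm_lt_sq // hN.
have e0' : 0 < Num.sqrt e by rewrite sqrtr_gt0.
have [N hN] := h _ e0'; exists N => n /hN.
by rewrite ipnorm_lt_sq // sqr_sqrtr // ltW.
Qed.

Lemma cauchy_seqP u : cauchy_seq ip u <->
  (forall e, 0 < e -> exists N, forall m n, (N <= m)%N -> (N <= n)%N ->
     ipnorm (u m - u n) < e).
Proof.
split=> h e e0.
  have [N hN] := h _ (exprn_gt0 2 e0).
  by exists N => m n hm hn; rewrite ipnorm_lt_sq // hN.
have e0' : 0 < Num.sqrt e by rewrite sqrtr_gt0.
have [N hN] := h _ e0'; exists N => m n hm /(hN m n hm).
by rewrite ipnorm_lt_sq // sqr_sqrtr // ltW.
Qed.

Lemma cvgC_ipr u x a : converges ip u x -> cvgC (fun n => ip a (u n)) (ip a x).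
Proof.
move=> /convergesP h e e0.
have ha : 0 < ipnorm a + 1 by have := ipnorm_ge0 a; lra.
have [N hN] := h (e / (ipnorm a + 1)) (divr_gt0 e0 ha).
exists N => n /hN; rewrite ltr_pdivlMr // => hn.
rewrite -ipBr; apply: le_lt_trans (normc_ip_le _ _) _; rewrite ltcR.
have := ipnorm_ge0 (u n - x); have := ipnorm_ge0 a; nra.
Qed.

Lemma cvgC_ipl u x a : converges ip u x -> cvgC (fun n => ip (u n) a) (ip x a).
Proof.
move=> /(cvgC_ipr a) /cvgC_conj h.
have -> : (fun n => ip (u n) a) = (fun n => conjc (ip a (u n))).
  by apply: funext => n; rewrite ipC.
by rewrite [ip x a]ipC.
Qed.

Lemma converges_cst x : converges ip (fun _ => x) x.
Proof. by apply/convergesP => e e0; exists 0%N => n _; rewrite subrr ipnorm0. Qed.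

Lemma convergesZD (a : R[i]) u w x y : converges ip u x -> converges ip w y ->
  converges ip (fun n => a *: u n + w n) (a *: x + y).
Proof.
move=> /convergesP h1 /convergesP h2; apply/convergesP => e e0.
have ha : 0 < Normc.normc a + 1 by have := normc_ge0 a; lra.
have e2 : 0 < e / 2 by rewrite divr_gt0.
have [N1 hN1] := h1 _ (divr_gt0 e2 ha).
have [N2 hN2] := h2 _ e2.
exists (maxn N1 N2) => n hn.
have := hN1 n (leq_trans (leq_maxl _ _) hn); rewrite ltr_pdivlMr // => hn1.
have hn2 := hN2 n (leq_trans (leq_maxr _ _) hn).
have -> : a *: u n + w n - (a *: x + y) = a *: (u n - x) + (w n - y).
  by rewrite scalerBr opprD addrACA.
apply: le_lt_trans (ipnormD_le _ _) _; rewrite ipnormZ.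
have := normc_ge0 a; have := ipnorm_ge0 (u n - x); nra.
Qed.

Lemma converges_cauchy u x : converges ip u x -> cauchy_seq ip u.
Proof.
move=> /convergesP h; apply/cauchy_seqP => e e0.
have e2 : 0 < e / 2 by rewrite divr_gt0.
have [N hN] := h _ e2.
exists N => m n hm hn; apply: le_lt_trans (ipnorm_sub_le _ x _) _.
have := hN m hm; have := hN n hn; rewrite [ipnorm (x - u n)]ipnormB; lra.
Qed.

Lemma ipnorm_sub_cvg x u w : converges ip u w ->
  forall e, 0 < e -> exists N, forall n, (N <= n)%N ->
    ipnorm (x - w) - e < ipnorm (x - u n) /\ ipnorm (x - u n) < ipnorm (x - w) + e.
Proof.
move=> /convergesP h e e0; have [N hN] := h e e0; exists N => n /hN hn.
have t1 := ipnorm_sub_le x (u n) w; have t2 := ipnorm_sub_le x w (u n).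
rewrite [ipnorm (w - u n)]ipnormB in t2; split; lra.
Qed.

Lemma closure_set_sub (A : set V) : A `<=` closure_set ip A.
Proof. by move=> x hx; exists (fun _ => x); split => //; exact: converges_cst. Qed.

Lemma closure_set_ip_eq0 (A : set V) x z :
  closure_set ip A x -> (forall y, A y -> ip y z = 0) -> ip x z = 0.
Proof.
move=> [u [hu /(cvgC_ipl z) hc]] h.
by apply: cvgC_eq hc (cvgC_cst 0) => n; exact: h.
Qed.

End InnerProduct.

Definition subspace (R : realType) (V : lmodType R[i]) (M : set V) : Prop :=
  M 0 /\ forall a x y, M x -> M y -> M (a *: x + y).

Section Subspace.
Variables (R : realType) (V : lmodType R[i]) (M : set V).
Hypothesis M_subspace : subspace M.

Lemma subspace0 : M 0.
Proof. by case: M_subspace. Qed.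

Lemma subspaceZ a y : M y -> M (a *: y).
Proof. by case: M_subspace => M0 Ml hy; have := Ml a y 0 hy M0; rewrite addr0. Qed.

Lemma subspaceD y z : M y -> M z -> M (y + z).
Proof. by case: M_subspace => _ Ml hy hz; have := Ml 1 y z hy hz; rewrite scale1r. Qed.

Lemma subspaceB y z : M y -> M z -> M (y - z).
Proof. by move=> hy hz; rewrite -scaleN1r addrC; case: M_subspace => _; apply. Qed.

End Subspace.

Section Projection.
Variables (R : realType) (V : lmodType R[i]) (ip : V -> V -> R[i]).
Hypothesis ip_hilbert : is_hilbert ip.
Let ip_inner : is_inner_product ip := proj1 ip_hilbert.
Local Notation nrm := (ipnorm ip).

Lemma parallelogram a b :
  nrm (a + b) ^+ 2 + nrm (a - b) ^+ 2 = 2 * nrm a ^+ 2 + 2 * nrm b ^+ 2.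
Proof.
rewrite !(ipnorm_sq ip_inner) /normsq !(ipDl ip_inner) !(ipDr ip_inner).
rewrite !(ipNl ip_inner) !(ipNr ip_inner) !ReD !ReN; lra.
Qed.

Lemma ip_eq0_of_min w y :
  (forall t : R[i], nrm w <= nrm (w - t *: y)) -> ip w y = 0.
Proof.
move=> hmin; have [->|y0] := eqVneq y 0; first by rewrite (ip0r ip_inner).
have yy0 : ip y y != 0 by apply/eqP=> /(ipxx_eq0 ip_inner) /eqP; rewrite (negbTE y0).
have yy_gt0 : 0 < ip y y by rewrite lt_def yy0 (ipxx_ge0 ip_inner).
have := hmin (ip w y / ip y y).
rewrite -(ler_pXn2r (_ : (0 < 2)%N)) ?nnegrE ?ipnorm_ge0 //.
rewrite !(ipnorm_sq ip_inner) -lecR -!(ipxxE ip_inner) (ipxx_sub_proj ip_inner) //.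
rewrite -subr_ge0 addrAC subrr add0r oppr_ge0 => h.
have : ip w y * conjc (ip w y) / ip y y == 0.
  by rewrite eq_le h divr_ge0 ?mulcJ_ge0 ?ltW.
by rewrite mulf_eq0 invr_eq0 (negbTE yy0) orbF -normCK expf_eq0 /= normr_eq0 => /eqP.
Qed.

Section ClosestPoint.
Variables (M : set V) (x : V) (d : R) (f : nat -> V).
Hypotheses (M_subspace : subspace M) (d_ge0 : 0 <= d).
Hypothesis d_lb : forall y, M y -> d <= nrm (x - y).
Hypotheses (fM : forall n, M (f n)) (f_dist : forall n, nrm (x - f n) < d + inv_succ R n).

(* Parallelogram law for x - f m and x - f n: their half-sum is x minus a
   point of M, so its norm is at least d. *)
Lemma minimizing_sub_sq m n :
  nrm (f m - f n) ^+ 2 <= 2 * (2 * d + 1) * (inv_succ R m + inv_succ R n).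
Proof.
pose mid := (2 : R[i])^-1 *: (f m + f n).
have hmid : d <= nrm (x - mid).
  by apply: d_lb; apply: (subspaceZ M_subspace); apply: (subspaceD M_subspace).
have e1 : (x - f m) + (x - f n) = (2 : R)%:C *: (x - mid).
  rewrite /mid scalerBr scalerA rmorph_nat mulfV ?scale1r; last by rewrite pnatr_eq0.
  by rewrite scaler_nat mulr2n opprD addrACA.
have e2 : f m - f n = (x - f n) - (x - f m) by rewrite [RHS]addrC opprB addrA subrK.
have := parallelogram (x - f m) (x - f n).
rewrite e1 (ipnormZ_real ip_inner) [nrm (_ - (x - f n))](ipnormB ip_inner) -e2.
rewrite ger0_norm //.
have sq_bound k : nrm (x - f k) ^+ 2 <= d ^+ 2 + (2 * d + 1) * inv_succ R k.
  have := f_dist k; have := inv_succ_le1 R k; have := inv_succ_gt0 R k.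
  have := ipnorm_ge0 ip (x - f k); rewrite !expr2; nra.
have := sq_bound m; have := sq_bound n.
have : d ^+ 2 <= nrm (x - mid) ^+ 2 by rewrite !expr2; apply: ler_pM.
rewrite !exprMn; lra.
Qed.

Lemma minimizing_cauchy : cauchy_seq ip f.
Proof.
apply/(cauchy_seqP ip_inner) => e e0.
have hc : 0 < e ^+ 2 / (4 * (2 * d + 1)).
  by rewrite divr_gt0 ?exprn_gt0 //; move: d_ge0; lra.
have [N hN] := inv_succ_small hc.
exists N => m n hm hn.
rewrite (ipnorm_lt_sq ip_inner) // -(ipnorm_sq ip_inner).
apply: le_lt_trans (minimizing_sub_sq m n) _.
have := inv_succ_le R hm; have := inv_succ_le R hn; have := inv_succ_gt0 R N.
move: hN; rewrite ltr_pdivlMr; last by move: d_ge0; lra.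
move: d_ge0; nra.
Qed.

Lemma minimizing_limit_orth p : converges ip f p -> forall y, M y -> ip (x - p) y = 0.
Proof.
move=> f_p y My.
have dist_ge : forall t : R[i], d <= nrm (x - p - t *: y).
  move=> t; have hc := convergesZD ip_inner t (converges_cst ip_inner y) f_p.
  apply/ler_addgt0Pr => e e0.
  have [N /(_ N (leqnn N)) [_ hN]] := ipnorm_sub_cvg ip_inner x hc e0.
  have := d_lb (subspaceD M_subspace (subspaceZ M_subspace t My) (fM N)).
  have -> : x - p - t *: y = x - (t *: y + p) by rewrite opprD addrA addrAC.
  lra.
have dist_le : nrm (x - p) <= d.
  apply/ler_addgt0Pr => e e0; have e2 : 0 < e / 2 by rewrite divr_gt0.
  have [N hN] := ipnorm_sub_cvg ip_inner x f_p e2.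
  have [N' hN'] := inv_succ_small e2.
  have [h1 _] := hN (maxn N N') (leq_maxl _ _).
  have := f_dist (maxn N N'); have := inv_succ_le R (leq_maxr N N'); lra.
by apply: ip_eq0_of_min => t; exact: le_trans dist_le (dist_ge t).
Qed.

End ClosestPoint.

Lemma orthogonal_projection (M : set V) : subspace M ->
  forall x, exists2 p, closure_set ip M p & forall y, M y -> ip (x - p) y = 0.
Proof.
move=> M_subspace x.
pose E := [set r | exists y, M y /\ r = nrm (x - y)].
have E0 : E (nrm x) by exists 0; rewrite subr0; split => //; exact: subspace0.
have E_lb : has_lbound E by exists 0 => r [y [_ ->]]; exact: ipnorm_ge0.
have E_inf : has_inf E by split => //; exists (nrm x).
have d_lb : forall y, M y -> inf E <= nrm (x - y).
  by move=> y My; apply: (ge_inf E_lb); exists y.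
have d_ge0 : 0 <= inf E.
  by apply: lb_le_inf; [exists (nrm x) | move=> r [y [_ ->]]; exact: ipnorm_ge0].
have near_inf : forall n, exists y, M y /\ nrm (x - y) < inf E + inv_succ R n.
  by move=> n; have [r [y [My ->]] hr] := inf_adherent (inv_succ_gt0 R n) E_inf; exists y.
have [f hf] := choice near_inf.
have fM : forall n, M (f n) by move=> n; case: (hf n).
have f_dist : forall n, nrm (x - f n) < inf E + inv_succ R n by move=> n; case: (hf n).
have [p f_p] := ip_hilbert.2 f (minimizing_cauchy M_subspace d_ge0 d_lb fM f_dist).
exists p; first by exists f.
exact (minimizing_limit_orth M_subspace d_lb fM f_dist f_p).
Qed.

Lemma orthogonal_complement2_sub_closure (M : set V) : subspace M ->
  forall x, (forall z, (forall y, M y -> ip z y = 0) -> ip x z = 0) ->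
  closure_set ip M x.
Proof.
move=> M_subspace x hx.
have [p Mp p_orth] := orthogonal_projection M_subspace x.
have h1 : ip x (x - p) = 0 by apply: hx => y My; rewrite p_orth.
have h2 : ip p (x - p) = 0.
  apply: (closure_set_ip_eq0 ip_inner Mp) => y My.
  by rewrite (ipC ip_inner) p_orth // conjc0.
have : ip (x - p) (x - p) = 0 by rewrite (ipBl ip_inner) h1 h2 subrr.
by move/(ipxx_eq0 ip_inner)/eqP; rewrite subr_eq0 => /eqP ->.
Qed.

End Projection.

Section ProductSpace.
Variables (R : realType) (H K : lmodType R[i]).
Variables (ipH : H -> H -> R[i]) (ipK : K -> K -> R[i]).

Definition ip_prod (x y : H * K) : R[i] := ipH x.1 y.1 + ipK x.2 y.2.

Lemma normsq_prod z : normsq ip_prod z = normsq ipH z.1 + normsq ipK z.2.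
Proof. exact: ReD. Qed.

Hypotheses (hH : is_inner_product ipH) (hK : is_inner_product ipK).

Lemma ip_prod_inner : is_inner_product ip_prod.
Proof.
split.
- by move=> a x y z; rewrite /ip_prod /= (ipDZl hH) (ipDZl hK); ring.
- by move=> x y; rewrite /ip_prod rmorphD /= -(ipC hH) -(ipC hK).
- by move=> x; rewrite /ip_prod addr_ge0 // ipxx_ge0.
- move=> [x1 x2] /eqP; rewrite /ip_prod /= paddr_eq0 ?(ipxx_ge0 hH) ?(ipxx_ge0 hK) //.
  by case/andP => /eqP /(ipxx_eq0 hH) -> /eqP /(ipxx_eq0 hK) ->.
Qed.

Lemma converges_prodP w x y : converges ip_prod w (x, y) <->
  converges ipH (fun n => (w n).1) x /\ converges ipK (fun n => (w n).2) y.
Proof.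
split.
  move=> h; split=> e e0; have [N hN] := h e e0; exists N => n /hN;
  rewrite normsq_prod /=; have := normsq_ge0 hH ((w n).1 - x);
  have := normsq_ge0 hK ((w n).2 - y); lra.
move=> [h1 h2] e e0; have e2 : 0 < e / 2 by rewrite divr_gt0.
have [N1 hN1] := h1 _ e2; have [N2 hN2] := h2 _ e2.
exists (maxn N1 N2) => n hn; rewrite normsq_prod /=.
have := hN1 n (leq_trans (leq_maxl _ _) hn); have := hN2 n (leq_trans (leq_maxr _ _) hn).
lra.
Qed.

Lemma hilbert_prod : is_hilbert ipH -> is_hilbert ipK -> is_hilbert ip_prod.
Proof.
move=> [_ cH] [_ cK]; split; first exact: ip_prod_inner.
move=> w cw.
have c1 : cauchy_seq ipH (fun n => (w n).1).
  move=> e e0; have [N hN] := cw e e0; exists N => m n hm hn.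
  have := hN m n hm hn; rewrite normsq_prod /=.
  have := normsq_ge0 hK ((w m).2 - (w n).2); lra.
have c2 : cauchy_seq ipK (fun n => (w n).2).
  move=> e e0; have [N hN] := cw e e0; exists N => m n hm hn.
  have := hN m n hm hn; rewrite normsq_prod /=.
  have := normsq_ge0 hH ((w m).1 - (w n).1); lra.
have [x hx] := cH _ c1; have [y hy] := cK _ c2.
by exists (x, y); apply/converges_prodP.
Qed.

End ProductSpace.

Section LinearRelations.
Variables (R : realType) (A B : lmodType R[i]).

Lemma linrelB (T : set (A * B)) p q :
  linrel T -> T p -> T q -> T (p.1 - q.1, p.2 - q.2).
Proof.
move=> [_ hl] hp hq; have := hl (-1) q p hq hp.
by rewrite !scaleN1r ![- _ + _]addrC.
Qed.

Lemma rdom_subspace (T : set (A * B)) : linrel T -> subspace (rdom T).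
Proof.
move=> [T0 Tl]; split; first by exists 0.
by move=> a x y [x' hx] [y' hy]; exists (a *: x' + y'); exact: Tl a _ _ hx hy.
Qed.

Variables (ipA : A -> A -> R[i]) (ipB : B -> B -> R[i]).
Hypotheses (hA : is_inner_product ipA) (hB : is_inner_product ipB).

Lemma radj_subspace (T : set (A * B)) : subspace (radj ipA ipB T).
Proof.
split; first by move=> t _ /=; rewrite (ip0l hA) (ip0l hB).
by move=> a p q hp hq t ht /=; rewrite (ipDZl hA) (ipDZl hB) hp // hq.
Qed.

Lemma radjD (T : set (A * B)) p q : radj ipA ipB T p -> radj ipA ipB T q ->
  radj ipA ipB T (p.1 + q.1, p.2 + q.2).
Proof. by move=> hp hq t ht /=; rewrite (ipDl hA) (ipDl hB) hp // hq. Qed.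

Lemma radjB (T : set (A * B)) p q : radj ipA ipB T p -> radj ipA ipB T q ->
  radj ipA ipB T (p.1 - q.1, p.2 - q.2).
Proof. by move=> hp hq t ht /=; rewrite (ipBl hA) (ipBl hB) hp // hq. Qed.

End LinearRelations.

Section Friedrichs.
Variables (R : realType) (H K : lmodType R[i]).
Variables (ipH : H -> H -> R[i]) (ipK : K -> K -> R[i]).
Variables (S : set (H * H)) (c : R) (Q : H -> K).
Hypotheses (hHh : is_hilbert ipH) (hKh : is_hilbert ipK).
Hypotheses (linS : linrel S) (rep : representing_map ipH ipK S c Q).
Let hH : is_inner_product ipH := proj1 hHh.
Let hK : is_inner_product ipK := proj1 hKh.
Let domS : subspace (rdom S) := rdom_subspace linS.

Local Notation G := (graph_on (rdom S) Q).
Local Notation Qs := (radj ipH ipK G).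
Local Notation Qss := (radj ipK ipH Qs).
Local Notation SF := (friedrichs ipH ipK S c Q).
Local Notation Sf := (weak_friedrichs ipH ipK S c Q).
Local Notation Sa := (radj ipH ipH S).

Lemma QZD a x y : rdom S x -> rdom S y -> Q (a *: x + y) = a *: Q x + Q y.
Proof. by case: rep => h _; exact: h. Qed.

Lemma QB x y : rdom S x -> rdom S y -> Q (x - y) = Q x - Q y.
Proof.
by move=> hx hy; have := QZD (-1) hy hx; rewrite !scaleN1r addrC [- Q y + _]addrC.
Qed.

Lemma Q_form phi phi' psi : S (phi, phi') -> rdom S psi ->
  ipH phi' psi = c%:C * ipH phi psi + ipK (Q phi) (Q psi).
Proof. by case: rep => _ h; exact: h. Qed.

Lemma graph_subspace : subspace G.
Proof.
have Q0 : Q 0 = 0.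
  have := QZD 1 (subspace0 domS) (subspace0 domS); rewrite !scale1r addr0 => h.
  by apply: (addrI (Q 0)); rewrite addr0 -h.
split; first by split; [exact: subspace0 | rewrite Q0].
move=> a [x1 x2] [y1 y2] [/= hx1 ->] [/= hy1 ->]; split => /=.
  by case: domS => _; apply.
by rewrite QZD.
Qed.

Lemma S_sub_adj : S `<=` Sa.
Proof.
move=> [phi phi'] hp [psi psi'] hq /=.
rewrite (Q_form hp (ex_intro _ _ hq)) [ipH phi psi'](ipC hH).
rewrite (Q_form hq (ex_intro _ _ hp)) conjc_realMD.
by rewrite -(ipC hH) -(ipC hK).
Qed.

Lemma Qadj_of_S f g : S (f, g) -> Qs (Q f, g - c%:C *: f).
Proof.
move=> hfg [psi k] [/= hpsi ->].
by rewrite (ipBl hH) (ipZl hH) (Q_form hfg hpsi) addrAC subrr add0r.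
Qed.

Lemma graph_sub_Qss : G `<=` Qss.
Proof.
move=> [f k] [/= hf ->] [h l] hq /=.
by rewrite (ipC hH) (hq (f, Q f) (conj hf erefl)) -(ipC hK).
Qed.

Lemma SF_sub_adj : SF `<=` Sa.
Proof.
move=> [phi phi'] [k [/= hss hs]] [f g] hfg /=.
have /= eA := hs (f, Q f) (conj (ex_intro _ _ hfg) erefl).
have /= eB := hss _ (Qadj_of_S hfg).
rewrite (ipBl hH) (ipZl hH) in eA; rewrite (ipBr hH) (ipZr_real hH) in eB.
have : ipH phi' f = ipK k (Q f) + c%:C * ipH phi f by rewrite -eA subrK.
by rewrite eB subrK.
Qed.

Lemma SF_ip_sym p q : SF p -> SF q -> ipH p.2 q.1 = ipH p.1 q.2.
Proof.
move=> [k [hpk hk]] [l [hql hl]].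
have /= e1 := hql _ hk; have /= e2 := hpk _ hl.
rewrite (ipBr hH) (ipZr_real hH) in e1; rewrite (ipBr hH) (ipZr_real hH) in e2.
have f1 : ipH q.1 p.2 = ipK l k + c%:C * ipH q.1 p.1 by rewrite e1 subrK.
have f2 : ipH p.1 q.2 = ipK k l + c%:C * ipH p.1 q.1 by rewrite e2 subrK.
rewrite [ipH p.2 q.1](ipC hH) f1 addrC conjc_realMD addrC.
by rewrite -(ipC hK) -(ipC hH) f2.
Qed.

Lemma Sf_eq_rsum : Sf = rsum S [set p | p.1 = 0 /\ rmul Sa p.2].
Proof.
apply/seteqP; split.
  move=> [phi phi'] [k [[/= [g hg] ->] hs]].
  exists (phi, g), (0, phi' - g); split => //; split.
    split => //= [[psi psi']] hpsi /=.
    have := hs (psi, Q psi) (conj (ex_intro _ _ hpsi) erefl).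
    rewrite /= (ipBl hH) (ipZl hH) => e.
    rewrite (ip0l hH) (ipBl hH) (Q_form hg (ex_intro _ _ hpsi)) -e; ring.
  by rewrite addr0 addrC subrK.
move=> p [[f g] [[p0 m] [hfg [[/= ->] hm] ->]]] /=.
rewrite addr0; exists (Q f); split; first by split => //; exists g.
move=> [psi k] [/= [psi' hpsi'] ->] /=.
have hm' : ipH m psi = 0 by rewrite (hm _ hpsi') (ip0l hH).
rewrite (ipBl hH) (ipDl hH) hm' (ipZl hH) (Q_form hfg (ex_intro _ _ hpsi')); ring.
Qed.

Lemma dom_form_closure_sub_closure : dom_form_closure ipH S `<=` closure_set ipH (rdom S).
Proof.
move=> x [u [hu [hc _]]]; exists (fun n => (u n).1); split => // n.
by exists (u n).2; rewrite -surjective_pairing.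
Qed.

Lemma rdom_sub_dom_form_closure : rdom S `<=` dom_form_closure ipH S.
Proof.
move=> x [x' hx]; exists (fun _ => (x, x')); split => //; split.
  exact: converges_cst hH x.
by move=> e e0; exists 0%N => m n _ _ /=; rewrite !subrr (ip0l hH) normr0 ltcR.
Qed.

Lemma form_ipE (u : nat -> H * H) m n : (forall n, S (u n)) ->
  ipH ((u n).2 - (u m).2) ((u n).1 - (u m).1) =
  (c * normsq ipH ((u n).1 - (u m).1) + normsq ipK (Q (u n).1 - Q (u m).1))%:C.
Proof.
move=> hu; have Su k : S ((u k).1, (u k).2) by rewrite -surjective_pairing.
have dom_u k : rdom S (u k).1 by exists (u k).2.
rewrite (Q_form (linrelB linS (Su n) (Su m)) (subspaceB domS (dom_u n) (dom_u m))).
by rewrite /= (QB (dom_u n) (dom_u m)) (ipxxE hH) (ipxxE hK) rmorphD rmorphM.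
Qed.

Lemma adj_sub_SF p : Sa p -> dom_form_closure ipH S p.1 -> SF p.
Proof.
case: p => phi phi' hp [u [hu [u_phi u_form]]] /=.
have dom_u n : rdom S (u n).1 by exists (u n).2; rewrite -surjective_pairing.
have cQ : cauchy_seq ipK (fun n => Q (u n).1).
  move=> e e0; have e2 : 0 < e / 2 by rewrite divr_gt0.
  have hc1 : 0 < `|c| + 1 by have := normr_ge0 c; lra.
  have [N1 hN1] := u_form _ e2.
  have [N2 hN2] := converges_cauchy hH u_phi (divr_gt0 e2 hc1).
  exists (maxn N1 N2) => m n hm hn.
  have := hN1 n m (leq_trans (leq_maxl _ _) hn) (leq_trans (leq_maxl _ _) hm).
  rewrite form_ipE // normc_real ltcR => h1.
  have h2 := hN2 m n (leq_trans (leq_maxr _ _) hm) (leq_trans (leq_maxr _ _) hn).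
  exact: ltr_of_normMD (normsq_ge0 hH _) (normsq_ge0 hK _) h2 h1.
have [k u_k] := hKh.2 _ cQ.
exists k; split => /=.
- move=> [h l] hq /=; rewrite (ipC hK) [ipH phi l](ipC hH); congr conjc.
  apply: (cvgC_eq _ (cvgC_ipr hK h u_k) (cvgC_ipr hH l u_phi)) => n /=.
  by rewrite (hq ((u n).1, Q (u n).1) (conj (dom_u n) erefl)).
- move=> [psi kq] [/= hpsi ->] /=; have [psi' hpsi'] := hpsi.
  have e : ipK (Q psi) k = ipH (psi' - c%:C *: psi) phi.
    apply: (cvgC_eq _ (cvgC_ipr hK _ u_k) (cvgC_ipr hH _ u_phi)) => n /=.
    by rewrite (ipBl hH) (ipZl hH) (Q_form hpsi' (dom_u n)); ring.
  rewrite (ipC hK) e -(ipC hH) (ipBr hH) (ipZr_real hH) (ipBl hH) (ipZl hH).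
  by rewrite (hp (psi, psi') hpsi').
Qed.

(* Q^** is the closure of the graph, so k is the limit of Q phi_n for some
   phi_n -> phi, and the form identity makes phi_n t(S)-Cauchy. *)
Lemma SF_dom_form_closure p : SF p -> dom_form_closure ipH S p.1.
Proof.
case: p => phi phi' [k [hss _]] /=.
have hP := hilbert_prod hH hK hHh hKh.
have hcl : closure_set (ip_prod ipH ipK) G (phi, k).
  apply: (orthogonal_complement2_sub_closure hP graph_subspace) => [[a b]] hz.
  have hq : Qs (- b, a).
    move=> [psi kk] [/= hpsi ->] /=.
    have := hz (psi, Q psi) (conj hpsi erefl); rewrite /ip_prod /= => /eqP.
    by rewrite addr_eq0 (ipNl hK) => /eqP.
  by have /= := hss _ hq; rewrite /ip_prod /= => <-; rewrite (ipNr hK) addNr.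
case: hcl => w [hw hwc]; have [w1 w2] := (converges_prodP hH hK w phi k).1 hwc.
have dom_w n : rdom S (w n).1 by case: (hw n).
have Q_w n : (w n).2 = Q (w n).1 by case: (hw n).
have [g hg] := choice dom_w.
exists (fun n => ((w n).1, g n)); split => //; split => // e e0.
have e2 : 0 < e / 2 by rewrite divr_gt0.
have hc1 : 0 < `|c| + 1 by have := normr_ge0 c; lra.
have [N1 hN1] := converges_cauchy hH w1 (divr_gt0 e2 hc1).
have [N2 hN2] := converges_cauchy hK w2 e2.
exists (maxn N1 N2) => m n hm hn.
rewrite (@form_ipE (fun n => ((w n).1, g n)) m n) //= -!Q_w normc_real ltcR.
have h1 := hN1 n m (leq_trans (leq_maxl _ _) hn) (leq_trans (leq_maxl _ _) hm).
have h2 := hN2 n m (leq_trans (leq_maxr _ _) hn) (leq_trans (leq_maxr _ _) hm).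
exact: ltr_normMD (normsq_ge0 hH _) (normsq_ge0 hK _) h1 h2.
Qed.

Lemma Qss_closed : closure_set (ip_prod ipH ipK) Qss `<=` Qss.
Proof.
move=> [f g] [w [hw hc]] [a b] hab /=.
have [c1 c2] := (converges_prodP hH hK w f g).1 hc.
apply: (cvgC_eq _ (cvgC_ipl hK a c2) (cvgC_ipl hH b c1)) => n /=.
exact: hw n (a, b) hab.
Qed.

(* Project (h, 0) onto the closed subspace Q^**: the projection (f, g) has
   (g, h - f) in Q^*, so {f, h - f + c f} lies in S_F. *)
Lemma SF_shift_onto h : exists q, SF q /\ q.2 - (c - 1)%:C *: q.1 = h.
Proof.
have hP := hilbert_prod hH hK hHh hKh.
have [[f g] hm horth] := orthogonal_projection hP (radj_subspace hK hH Qs) (h, 0).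
have hqs : Qs (g, h - f).
  move=> [psi kk] [/= hpsi ->] /=.
  have := horth (psi, Q psi) (graph_sub_Qss (conj hpsi erefl : G (psi, Q psi))).
  by rewrite /ip_prod /= => /eqP; rewrite addr_eq0 sub0r (ipNl hK) opprK => /eqP.
exists (f, (h - f) + c%:C *: f); split.
  by exists g; split; [exact: Qss_closed | rewrite /= addrK].
by rewrite /= rmorphB scalerBl scale1r opprB addrACA subrK subrr addr0.
Qed.

Lemma adj_SF_sub_SF : radj ipH ipH SF `<=` SF.
Proof.
move=> p hp.
have [q [hq q_shift]] := SF_shift_onto (p.2 - (c - 1)%:C *: p.1).
have hqa : radj ipH ipH SF q by move=> t ht; exact: SF_ip_sym hq ht.
have hr := radjB hH hH hp hqa.
have e2 : p.2 - q.2 = (c - 1)%:C *: (p.1 - q.1).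
  move: q_shift => /eqP; rewrite subr_eq => /eqP ->.
  by rewrite scalerBr opprD opprB addrCA addrA subrK.
have [q' [hq' q'_shift]] := SF_shift_onto (p.1 - q.1).
have := hr q' hq'; rewrite /= e2 (ipZl hH).
have -> : q'.2 = (p.1 - q.1) + (c - 1)%:C *: q'.1 by rewrite -q'_shift subrK.
rewrite (ipDr hH) (ipZr_real hH) => e.
have : ipH (p.1 - q.1) (p.1 - q.1) = 0.
  by apply: (addIr ((c - 1)%:C * ipH (p.1 - q.1) q'.1)); rewrite add0r -e.
move/(ipxx_eq0 hH)/eqP; rewrite subr_eq0 => /eqP e1.
move: e2; rewrite e1 subrr scaler0 => /eqP; rewrite subr_eq0 => /eqP e2'.
by rewrite [p]surjective_pairing e1 e2' -surjective_pairing.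
Qed.

Lemma rdom_sub_closure_adj : rdom S `<=` closure_set ipH (rdom S) `&` rdom Sa.
Proof.
move=> x hx; split; first exact: (closure_set_sub hH hx).
by have [x' hx'] := hx; exists x'; exact: S_sub_adj.
Qed.

Lemma friedrichs_eq : SF = [set p | Sa p /\ dom_form_closure ipH S p.1].
Proof.
apply/seteqP; split => p; last by move=> [Sa_p dom_p]; exact: adj_sub_SF.
by move=> SF_p; split; [exact: SF_sub_adj | exact: SF_dom_form_closure].
Qed.

Lemma friedrichs_unique (T : set (H * H)) : S `<=` T -> selfadjoint_rel ipH T ->
  rdom T `<=` dom_form_closure ipH S -> T = SF.
Proof.
move=> ST T_sa T_dom.
have T_SF : T `<=` SF.
  move=> p Tp; apply: adj_sub_SF.
    have adjT_p : radj ipH ipH T p by rewrite -T_sa.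
    by move=> q Sq; exact: adjT_p q (ST q Sq).
  by apply: T_dom; exists p.2; rewrite -surjective_pairing.
apply/seteqP; split => // q SF_q; rewrite T_sa => p Tp /=.
exact: SF_ip_sym SF_q (T_SF p Tp).
Qed.

Lemma Sf_of_decomp p g : S (p.1, g) -> Sa (0, p.2 - g) -> Sf p.
Proof.
move=> Sg Sa0; rewrite Sf_eq_rsum; exists (p.1, g), (0, p.2 - g); split => //.
by split => //; rewrite /= addr0 addrC subrK -surjective_pairing.
Qed.

Lemma weak_friedrichs_max (T : set (H * H)) : linrel T -> S `<=` T ->
  symmetric_rel ipH T -> rdom T `<=` rdom S -> T `<=` Sf.
Proof.
move=> linT ST T_sym T_dom p Tp.
have [g Sg] : rdom S p.1 by apply: T_dom; exists p.2; rewrite -surjective_pairing.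
have T0 : T (0, p.2 - g) by have := linrelB linT Tp (ST _ Sg); rewrite /= subrr.
by apply: (Sf_of_decomp Sg) => q Sq; exact: T_sym _ T0 q (ST q Sq).
Qed.

Lemma weak_friedrichs_eq_of_dom :
  rdom S = closure_set ipH (rdom S) `&` rdom Sa -> Sf = SF.
Proof.
move=> domS_eq; apply/seteqP; split => p.
  rewrite Sf_eq_rsum => -[[f g] [[z m] [Sfg [[/= ->] Sa0m] ->]]] /=.
  rewrite addr0; apply: adj_sub_SF => /=.
    by have := radjD hH hH (S_sub_adj Sfg) Sa0m; rewrite /= addr0.
  by apply: rdom_sub_dom_form_closure; exists g.
move=> SF_p; have [g Sg] : rdom S p.1.
  rewrite domS_eq; split.
    exact: dom_form_closure_sub_closure (SF_dom_form_closure SF_p).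
  by exists p.2; rewrite -surjective_pairing; exact: SF_sub_adj.
apply: (Sf_of_decomp Sg).
by have := radjB hH hH (SF_sub_adj SF_p) (S_sub_adj Sg); rewrite /= subrr.
Qed.

Lemma weak_friedrichs_eqP :
  Sf = SF <-> rdom S = closure_set ipH (rdom S) `&` rdom Sa.
Proof.
split; last exact: weak_friedrichs_eq_of_dom.
move=> Sf_SF; apply/seteqP; split; first exact: rdom_sub_closure_adj.
move=> x [x_cl [x' Sa_x]].
have adjSf_x : radj ipH ipH Sf (x, x').
  rewrite Sf_eq_rsum => q [[f g] [[z m] [Sfg [[/= ->] Sa0m] ->]]] /=.
  rewrite addr0 (ipDr hH) (Sa_x (f, g) Sfg) /=.
  suff -> : ipH x m = 0 by rewrite addr0.
  apply: (closure_set_ip_eq0 hH x_cl) => y [y' Syy'].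
  by rewrite (ipC hH) (Sa0m (y, y') Syy') /= (ip0l hH) conjc0.
rewrite Sf_SF in adjSf_x; have := adj_SF_sub_SF adjSf_x.
by rewrite -Sf_SF => -[k [[/= ? _] _]].
Qed.

End Friedrichs.

Unset Implicit Arguments.
Set Strict Implicit.

Theorem theorem4p1 (R : realType) (H K : lmodType R[i])
  (ipH : H -> H -> R[i]) (ipK : K -> K -> R[i])
  (S : set (H * H)) (gamma c : R) (Q : H -> K) :
  is_hilbert ipH -> is_hilbert ipK ->
  linrel S -> semibounded_with ipH S gamma ->
  c <= gamma -> representing_map ipH ipK S c Q ->
  let SF := friedrichs ipH ipK S c Q in
  let Sf := weak_friedrichs ipH ipK S c Q in
  (* (a) *)
  (SF = [set p | radj ipH ipH S p /\ dom_form_closure ipH S p.1] /\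
   (forall T : set (H * H), linrel T -> S `<=` T -> selfadjoint_rel ipH T ->
      rdom T `<=` dom_form_closure ipH S -> T = SF)) /\
  (* (b) *)
  (Sf = rsum S [set p | p.1 = 0 /\ rmul (radj ipH ipH S) p.2] /\
   (forall T : set (H * H), linrel T -> S `<=` T -> symmetric_rel ipH T ->
      rdom T `<=` rdom S -> T `<=` Sf)) /\
  (* (c) *)
  ((Sf = SF <-> rdom S = closure_set ipH (rdom S) `&` rdom (radj ipH ipH S)) /\
   (closed_set ipH (rdom S) -> Sf = SF)).
Proof.
(* The representing map already makes c a lower bound of S. *)
move=> hH hK linS _ _ rep SF Sf.
split; [split | split; [split | split]].
- exact: friedrichs_eq.
- by move=> T _; exact: friedrichs_unique.
- exact: Sf_eq_rsum.
- exact: weak_friedrichs_max.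
- exact: weak_friedrichs_eqP.
- move=> domS_closed; apply/(weak_friedrichs_eqP hH hK linS rep).
  apply/seteqP; split; first exact: rdom_sub_closure_adj hH hK rep.
  by move=> x [/domS_closed].
Qed.
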